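(* For any value $\gamma \in (0,1]$, the set function $\mathbf{S} \mapsto G(\mathbf{S},\gamma)$, defined on sub-multisets $\mathbf{S}\subseteq\mathbf{W}$ by $$G(\mathbf{S},\gamma) = \sum_{f\in\mathbf{F}}\sum_{t\in\mathrm{dom}(\mathbf{W},f)} d(t)\cdot\log\left(\frac{m_{\mathbf{S}}(t,f)+\gamma}{\gamma}\right),$$ is non-negative, monotone and submodular.
   Context: A workload $\mathbf{W}$ is a finite multiset of queries; $\mathbf{S}\subseteq\mathbf{W}$ ranges over sub-multisets. There is a finite set $\mathbf{F}$ of features; for each query $q$ and feature $f$, $f(q)$ is a finite multiset of tokens; $f(\mathbf{S}) = \biguplus_{q\in\mathbf{S}} f(q)$, $\mathrm{dom}(\mathbf{W},f)$ is the set of distinct tokens in $f(\mathbf{W})$, and $m_{\mathbf{S}}(t,f)$ is the multiplicity of token $t$ in $f(\mathbf{S})$. $d$ is a target probability distribution on the tokens $\{(f,t): t\in\mathrm{dom}(\mathbf{W},f)\}$. Monotone: $A\subseteq B\Rightarrow G(A)\le G(B)$; submodular: $G(A\cup\{q\})-G(A)\ge G(B\cup\{q\})-G(B)$ for $A\subseteq B$. *)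

From HB Require Import structures.
From mathcomp Require Import all_boot all_order all_algebra.
From mathcomp Require Import reals exp.
Set Implicit Arguments. Unset Strict Implicit. Unset Printing Implicit Defensive.
Import Order.TTheory GRing.Theory Num.Theory.
Local Open Scope ring_scope.

(* Finite multisets are represented by sequences, up to permutation;
   A is a sub-multiset of B iff every element occurs at most as often in A as in B. *)
Definition submset (T : eqType) (A B : seq T) : Prop :=
  forall x, (count_mem x A <= count_mem x B)%N.

Section Workload.
Variables (Q Tok : eqType) (F : finType) (feat : F -> Q -> seq Tok).

Definition featS (f : F) (S : seq Q) : seq Tok := flatten [seq feat f q | q <- S].

Definition dom (W : seq Q) (f : F) : seq Tok := undup (featS f W).

Definition mult (S : seq Q) (t : Tok) (f : F) : nat := count_mem t (featS f S).

Definition is_token_distribution (R : realType) (W : seq Q) (d : F -> Tok -> R) : Prop :=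
  (forall f t, t \in dom W f -> 0 <= d f t) /\
  \sum_(f : F) \sum_(t <- dom W f) d f t = 1.

Definition G (R : realType) (W : seq Q) (d : F -> Tok -> R) (S : seq Q) (gamma : R) : R :=
  \sum_(f : F) \sum_(t <- dom W f) d f t * ln (((mult S t f)%:R + gamma) / gamma).

End Workload.

From HB Require Import structures.
From mathcomp Require Import all_boot all_order all_algebra.
From mathcomp Require Import reals exp.
From mathcomp Require Import ring lra zify.
Import Order.TTheory GRing.Theory Num.Theory.
Local Open Scope ring_scope.

(* G is a nonnegatively weighted sum of x |-> ln ((x + gamma) / gamma) applied
   to token multiplicities.  Multiplicities are additive in S and monotone for
   sub-multisets, while this function is nonnegative, nondecreasing and has
   decreasing increments on [0, +oo); hence each summand, and so G, is
   nonnegative, monotone and submodular. *)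

Lemma leq_sum_submset (T : eqType) (c : T -> nat) (A B : seq T) :
  submset A B -> (\sum_(x <- A) c x <= \sum_(x <- B) c x)%N.
Proof.
elim: A B => [|a A IHA] B AB; first by rewrite big_nil.
have aB : a \in B.
  by rewrite -has_pred1 has_count; apply: leq_trans (AB a); rewrite /= eqxx.
rewrite (perm_big _ (perm_to_rem aB)) !big_cons leq_add2l; apply: IHA => x.
by rewrite count_mem_rem; have := AB x => /=; case: (a == x) => /=; lia.
Qed.

Section Multiplicity.
Variables (Q Tok : eqType) (F : finType) (feat : F -> Q -> seq Tok).

Lemma mult_cons q S t f :
  mult feat (q :: S) t f = (count_mem t (feat f q) + mult feat S t f)%N.
Proof. by rewrite /mult /featS /= count_cat. Qed.

Lemma mult_submset A B t f :
  submset A B -> (mult feat A t f <= mult feat B t f)%N.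
Proof.
have multE S : mult feat S t f = (\sum_(q <- S) count_mem t (feat f q))%N.
  by rewrite /mult /featS count_flatten -map_comp sumnE big_map.
by move=> AB; rewrite !multE; apply: leq_sum_submset.
Qed.

End Multiplicity.

Lemma ln_ratio_ge0 (R : realType) (g x : R) :
  0 < g -> 0 <= x -> 0 <= ln ((x + g) / g).
Proof.
by move=> g_gt0 x_ge0; apply: ln_ge0; rewrite ler_pdivlMr // mul1r lerDr.
Qed.

Lemma ln_ratio_homo (R : realType) (g x y : R) :
  0 < g -> 0 <= x <= y -> ln ((x + g) / g) <= ln ((y + g) / g).
Proof.
move=> g_gt0 /andP[x_ge0 xy].
have pos (z : R) : 0 <= z -> 0 < (z + g) / g.
  by move=> z_ge0; apply: divr_gt0 => //; lra.
by rewrite ler_ln ?posrE ?pos ?ler_pM2r ?invr_gt0 ?lerD2r //; lra.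
Qed.

(* The increment equals ln (1 + c / (x + g)), which decreases in x. *)
Lemma ln_ratio_incr_antitone (R : realType) (g a b c : R) :
  0 < g -> 0 <= a <= b -> 0 <= c ->
  ln ((c + b + g) / g) - ln ((b + g) / g) <=
  ln ((c + a + g) / g) - ln ((a + g) / g).
Proof.
move=> g_gt0 /andP[a_ge0 ab] c_ge0.
have incrE (x : R) : 0 <= x ->
    ln ((c + x + g) / g) - ln ((x + g) / g) = ln ((c + x + g) / (x + g)).
  move=> x_ge0; have xg_gt0 : 0 < x + g by lra.
  rewrite -ln_div ?posrE ?divr_gt0 //; last lra.
  by congr ln; field; rewrite !gt_eqF.
rewrite !incrE //; last lra.
rewrite ler_ln ?posrE ?divr_gt0 //; try lra.
rewrite ler_pdivrMr; last lra.
rewrite mulrAC ler_pdivlMr; last lra.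
nra.
Qed.

Section Objective.
Variables (R : realType) (Q Tok : eqType) (F : finType).
Variables (feat : F -> Q -> seq Tok) (W : seq Q).
Variables (d : F -> Tok -> R) (gamma : R).
Hypothesis d_ge0 : forall f t, t \in dom feat W f -> 0 <= d f t.
Hypothesis gamma_gt0 : 0 < gamma.

Let ln_mult S f t := ln (((mult feat S t f)%:R + gamma) / gamma).

Lemma ler_token_sum (u v : F -> Tok -> R) :
  (forall f t, t \in dom feat W f -> u f t <= v f t) ->
  \sum_(f : F) \sum_(t <- dom feat W f) d f t * u f t <=
  \sum_(f : F) \sum_(t <- dom feat W f) d f t * v f t.
Proof.
move=> uv; apply: ler_sum => f _; rewrite !big_seq; apply: ler_sum => t tW.
by apply: ler_wpM2l; [exact: d_ge0 | exact: uv].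
Qed.

Lemma G_ge0 S : 0 <= G feat W d S gamma.
Proof.
apply: sumr_ge0 => f _; rewrite big_seq; apply: sumr_ge0 => t tW.
by apply: mulr_ge0; [exact: d_ge0 | exact: ln_ratio_ge0].
Qed.

Lemma G_submset A B : submset A B -> G feat W d A gamma <= G feat W d B gamma.
Proof.
move=> AB; apply: ler_token_sum => f t _.
by apply: ln_ratio_homo; rewrite // ler0n ler_nat mult_submset.
Qed.

Lemma G_incr S S' : G feat W d S' gamma - G feat W d S gamma =
  \sum_(f : F) \sum_(t <- dom feat W f)
    d f t * (ln_mult S' f t - ln_mult S f t).
Proof.
rewrite /G -sumrB; apply: eq_bigr => f _.
by rewrite -sumrB; under eq_bigr do rewrite -mulrBr.
Qed.

Lemma G_submodular A B q : submset A B ->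
  G feat W d (q :: B) gamma - G feat W d B gamma <=
  G feat W d (q :: A) gamma - G feat W d A gamma.
Proof.
move=> AB; rewrite !G_incr; apply: ler_token_sum => f t _.
rewrite /ln_mult !mult_cons !natrD; apply: ln_ratio_incr_antitone => //.
by rewrite ler0n ler_nat mult_submset.
Qed.

End Objective.

Theorem proposition5p1 (R : realType) (Q Tok : eqType) (F : finType)
    (feat : F -> Q -> seq Tok) (W : seq Q) (d : F -> Tok -> R) (gamma : R) :
  is_token_distribution feat W d ->
  0 < gamma <= 1 ->
  (* non-negative *)
  (forall S, submset S W -> 0 <= G feat W d S gamma) /\
  (* monotone *)
  (forall A B, submset A B -> submset B W ->
     G feat W d A gamma <= G feat W d B gamma) /\
  (* submodular: adding one (more) occurrence of a query q of W *)
  (forall A B q, submset A B -> submset (q :: B) W ->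
     G feat W d (q :: B) gamma - G feat W d B gamma
       <= G feat W d (q :: A) gamma - G feat W d A gamma).
Proof.
move=> [d_ge0 _] /andP[gamma_gt0 _].
split; [|split].
- by move=> S _; exact: G_ge0.
- by move=> A B AB _; exact: G_submset.
- by move=> A B q AB _; exact: G_submodular.
Qed.
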